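(* Let $M$ be a mechanism that is $\delta$-Pareto efficient in all equilibria, and let $k$ be a positive integer. Let $M^k$ be the mechanism which, on a collection $A$ of $n$ alternatives, acts as $M$ acting on the collection $k$-$UN(A)$ (i.e., the players use the signals of $M$ for the collection $k$-$UN(A)$, $M$ selects a random element of $k$-$UN(A)$, i.e. a $k$-uniform distribution, and the final index is drawn from it). Then $M^k$ is $(\delta+\frac1k)$-close to the Pareto frontier in all equilibria.
   Context: Two players bargain over a collection (multiset) $A=(a^j)_{j\in[n]}\subset[0,1]^2$, $a^j_i$ being player $i$'s utility. A mechanism $M=(M_n)_n$ specifies for each $n$ signal sets $\Sigma_1(n),\Sigma_2(n)$ and a map $f_n:\Sigma_1(n)\times\Sigma_2(n)\to\Delta([n])$; with risk-neutral players it induces a game $\Gamma_M(A)$ with expected-utility payoffs, and $NEO_M(A)$ denotes its set of pure Nash equilibrium outcomes (expected utility vectors). A $k$-uniform distribution over $[n]$ is the uniform distribution over a multiset of size $k$ from $[n]$; $k$-$UN(A)$ is the collection, indexed by the $k$-uniform distributions $\mu$, of the points $\mathbb{E}_{j\sim\mu}[a^j]$. An allocation $x$ is $\varepsilon$-Pareto efficient w.r.t. a collection $C$ if no $c\in C$ has $c_1>x_1+\varepsilon$ and $c_2>x_2+\varepsilon$; $M$ is $\varepsilon$-Pareto efficient in all equilibria if for every collection $C$ every $x\in NEO_M(C)$ is $\varepsilon$-Pareto efficient w.r.t. $C$. $x$ is $\varepsilon$-close to the Pareto frontier of $A$ if no $y\in\mathrm{conv}(A)$ has $y_1>x_1+\varepsilon$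 and $y_2>x_2+\varepsilon$; a mechanism is $\varepsilon$-close to the Pareto frontier in all equilibria if for every collection $A$ every $x\in NEO(A)$ is $\varepsilon$-close to the Pareto frontier of $A$. *)

From HB Require Import structures.
From mathcomp Require Import all_boot all_order all_algebra.
Set Implicit Arguments. Unset Strict Implicit. Unset Printing Implicit Defensive.
Import Order.TTheory GRing.Theory Num.Theory.
Local Open Scope ring_scope.

Section Bargaining.
Variable R : realFieldType.

Definition collection (n : nat) (a : 'I_n -> R * R) : Prop :=
  forall j, (0 <= (a j).1 <= 1) /\ (0 <= (a j).2 <= 1).

Definition is_distr (n : nat) (p : 'I_n -> R) : Prop :=
  (forall j, 0 <= p j) /\ \sum_j p j = 1.

Definition expected (n : nat) (p : 'I_n -> R) (a : 'I_n -> R * R) : R * R :=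
  (\sum_j p j * (a j).1, \sum_j p j * (a j).2).

Record mechanism := Mechanism {
  Sig1 : nat -> Type;
  Sig2 : nat -> Type;
  mech_f : forall n, Sig1 n -> Sig2 n -> 'I_n -> R }.

Definition valid_mechanism (M : mechanism) : Prop :=
  forall n (s1 : Sig1 M n) (s2 : Sig2 M n), is_distr (mech_f s1 s2).

Definition payoff (M : mechanism) (n : nat) (a : 'I_n -> R * R)
  (s1 : Sig1 M n) (s2 : Sig2 M n) : R * R := expected (mech_f s1 s2) a.

Definition is_NE (M : mechanism) (n : nat) (a : 'I_n -> R * R)
  (s1 : Sig1 M n) (s2 : Sig2 M n) : Prop :=
  (forall s1' : Sig1 M n, (payoff a s1' s2).1 <= (payoff a s1 s2).1) /\
  (forall s2' : Sig2 M n, (payoff a s1 s2').2 <= (payoff a s1 s2).2).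

Definition NEO (M : mechanism) (n : nat) (a : 'I_n -> R * R) (x : R * R) : Prop :=
  exists (s1 : Sig1 M n) (s2 : Sig2 M n), is_NE a s1 s2 /\ x = payoff a s1 s2.

Definition eps_pareto_efficient (eps : R) (n : nat) (C : 'I_n -> R * R)
  (x : R * R) : Prop :=
  ~ exists j, x.1 + eps < (C j).1 /\ x.2 + eps < (C j).2.

Definition pareto_efficient_all_equilibria (eps : R) (M : mechanism) : Prop :=
  forall n (C : 'I_n -> R * R), collection C ->
  forall x, NEO M C x -> eps_pareto_efficient eps C x.

Definition in_conv (n : nat) (a : 'I_n -> R * R) (y : R * R) : Prop :=
  exists p : 'I_n -> R, is_distr p /\ y = expected p a.

Definition eps_close_frontier (eps : R) (n : nat) (a : 'I_n -> R * R)
  (x : R * R) : Prop :=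
  ~ exists y, in_conv a y /\ x.1 + eps < y.1 /\ x.2 + eps < y.2.

Definition close_frontier_all_equilibria (eps : R) (M : mechanism) : Prop :=
  forall n (a : 'I_n -> R * R), collection a ->
  forall x, NEO M a x -> eps_close_frontier eps a x.

(* multisets of size k from [n], as multiplicity functions *)
Definition kmultiset (n k : nat) :=
  {c : {ffun 'I_n -> 'I_k.+1} | (\sum_j (nat_of_ord (c j)) == k)%N}.

Definition kuniform (n k : nat) (c : kmultiset n k) : 'I_n -> R :=
  fun j => (nat_of_ord (val c j))%:R / k%:R.

Definition kUN_size (n k : nat) : nat := #|{: kmultiset n k}|.

Definition kUN (n k : nat) (e : 'I_(kUN_size n k) -> kmultiset n k)
  (a : 'I_n -> R * R) : 'I_(kUN_size n k) -> R * R :=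
  fun i => expected (kuniform (e i)) a.

(* M^k: run M on k-UN(A), then draw the final index from the selected
   k-uniform distribution.  e n enumerates the k-uniform distributions on [n]. *)
Definition mech_k (M : mechanism) (k : nat)
  (e : forall n, 'I_(kUN_size n k) -> kmultiset n k) : mechanism :=
  @Mechanism (fun n => Sig1 M (kUN_size n k)) (fun n => Sig2 M (kUN_size n k))
    (fun n s1 s2 j =>
       \sum_(i : 'I_(kUN_size n k)) mech_f s1 s2 i * kuniform (e n i) j).

End Bargaining.

(* An equilibrium outcome x of M^k on A is an equilibrium outcome of M on
   k-UN(A).  In the plane every point y of conv(A) is weakly dominated by a point
   t a^u + (1 - t) a^v of a segment between two alternatives: a convex
   combination of three points can be moved along a weight direction that keeps
   the total weight and does not decrease either coordinate until one weight
   vanishes, and induction on n reduces any combination to three points.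
   Rounding t down to m/k, the k-uniform distribution with m copies of u and
   k - m copies of v loses at most 1/k in each coordinate since utilities lie in
   [0,1].  So if y beat x by more than delta + 1/k in both coordinates, some
   element of k-UN(A) would beat x by more than delta. *)

From HB Require Import structures.
From mathcomp Require Import all_boot all_order all_algebra.
From mathcomp Require Import ring lra.
Import Order.TTheory GRing.Theory Num.Theory.
Local Open Scope ring_scope.
Set Implicit Arguments. Unset Strict Implicit.

Section EdgeDomination.
Variable R : realFieldType.
Implicit Types (S : R) (y P Q : R * R).

Definition dominated_on_edge S y P Q : Prop :=
  exists alpha beta : R, [/\ 0 <= alpha, 0 <= beta, alpha + beta = S,
    y.1 <= alpha * P.1 + beta * Q.1 & y.2 <= alpha * P.2 + beta * Q.2].

Lemma dominated_on_edge_le S S' y y' P Q :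
  dominated_on_edge S y P Q -> S = S' -> y'.1 <= y.1 -> y'.2 <= y.2 ->
  dominated_on_edge S' y' P Q.
Proof.
move=> [alpha [beta [a0 b0 eS le1 le2]]] <- le1' le2'.
by exists alpha, beta; split => //; lra.
Qed.

Lemma nonneg_direction (U V : R * R) : exists b g : R,
  [/\ b != 0 \/ g != 0, 0 <= b * U.1 + g * V.1 & 0 <= b * U.2 + g * V.2].
Proof.
have [/andP[/eqP eV /eqP eU] | ne] := boolP ((V.1 - V.2 == 0) && (U.2 - U.1 == 0)).
  have [U0|U0] := lerP 0 U.1.
    by exists 1, 0; split; [left; exact: oner_neq0 | nra | nra].
  by exists (-1), 0; split; [left; rewrite oppr_eq0 oner_neq0 | nra | nra].
have {}ne : V.1 - V.2 != 0 \/ U.2 - U.1 != 0 by move: ne; rewrite negb_and => /orP.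
(* both coordinates of b U + g V below equal -+ (U.1 V.2 - V.1 U.2) *)
have [d0|d0] := lerP (U.1 * V.2 - V.1 * U.2) 0.
  by exists (V.1 - V.2), (U.2 - U.1); split => //; nra.
exists (V.2 - V.1), (U.1 - U.2); split; [|nra|nra].
by rewrite -[V.2 - V.1]opprB -[U.1 - U.2]opprB !oppr_eq0.
Qed.

Lemma ratio_test3 (wa wb wc la lb lc : R) :
  0 <= wa -> 0 <= wb -> 0 <= wc -> la + lb + lc = 0 ->
  [|| la != 0, lb != 0 | lc != 0] ->
  [/\ la < 0, 0 <= wa * lb - la * wb & 0 <= wa * lc - la * wc] \/
  [/\ lb < 0, 0 <= wb * la - lb * wa & 0 <= wb * lc - lb * wc] \/
  [/\ lc < 0, 0 <= wc * la - lc * wa & 0 <= wc * lb - lc * wb].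
Proof.
move=> wa0 wb0 wc0 l0 lnz.
have [la0|la0] := ltP la 0; have [lb0|lb0] := ltP lb 0; have [lc0|lc0] := ltP lc 0.
- lra.
- have [ab|ab] := lerP 0 (wa * lb - la * wb); [left | right; left]; split; nra.
- have [ac|ac] := lerP 0 (wa * lc - la * wc); [left | right; right]; split; nra.
- by left; split; nra.
- have [bc|bc] := lerP 0 (wb * lc - lb * wc); [right; left | right; right]; split; nra.
- by right; left; split; nra.
- by right; right; split; nra.
- move: lnz; have [-> -> ->] : [/\ la = 0, lb = 0 & lc = 0] by split; lra.
  by rewrite eqxx.
Qed.

Lemma ratio_step_le (wi wj wk li lj lk Pi Pj Pk : R) : li < 0 -> li + lj + lk = 0 ->
  0 <= wi -> 0 <= li * Pi + lj * Pj + lk * Pk ->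
  wi * Pi + wj * Pj + wk * Pk <=
    (wi * lj - li * wj) / - li * Pj + (wi * lk - li * wk) / - li * Pk.
Proof.
move=> li0 l0 wi0 lP0.
have -> : (wi * lj - li * wj) / - li * Pj + (wi * lk - li * wk) / - li * Pk =
    wi * Pi + wj * Pj + wk * Pk + wi / - li * (li * Pi + lj * Pj + lk * Pk).
  have lk_def : lk = - li - lj by lra.
  by rewrite lk_def; field; rewrite lt_eqF.
by rewrite lerDl; apply: mulr_ge0 => //; apply: divr_ge0 => //; lra.
Qed.

Lemma ratio_step (wi wj wk li lj lk : R) (Pi Pj Pk : R * R) :
  li < 0 -> li + lj + lk = 0 -> 0 <= wi ->
  0 <= wi * lj - li * wj -> 0 <= wi * lk - li * wk ->
  0 <= li * Pi.1 + lj * Pj.1 + lk * Pk.1 -> 0 <= li * Pi.2 + lj * Pj.2 + lk * Pk.2 ->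
  dominated_on_edge (wi + wj + wk)
    (wi * Pi.1 + wj * Pj.1 + wk * Pk.1, wi * Pi.2 + wj * Pj.2 + wk * Pk.2) Pj Pk.
Proof.
move=> li0 l0 wi0 wj0 wk0 lP1 lP2.
exists ((wi * lj - li * wj) / - li), ((wi * lk - li * wk) / - li); split.
- by apply: divr_ge0 => //; lra.
- by apply: divr_ge0 => //; lra.
- have lk_def : lk = - li - lj by lra.
  by rewrite lk_def; field; rewrite lt_eqF.
- by apply: ratio_step_le.
- by apply: ratio_step_le.
Qed.

Lemma dominated_on_edge3 (wa wb wc : R) (A B C : R * R) :
  0 <= wa -> 0 <= wb -> 0 <= wc ->
  let y := (wa * A.1 + wb * B.1 + wc * C.1, wa * A.2 + wb * B.2 + wc * C.2) in
  [\/ dominated_on_edge (wa + wb + wc) y B C,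
       dominated_on_edge (wa + wb + wc) y A C
     | dominated_on_edge (wa + wb + wc) y A B].
Proof.
move=> wa0 wb0 wc0 y.
have [b [g [bg0 dir1 dir2]]] :=
  nonneg_direction (B.1 - A.1, B.2 - A.2) (C.1 - A.1, C.2 - A.2).
(* Shifting the weights along (-(b + g), b, g) keeps their total and does not
   decrease either coordinate of y; the ratio test says how far one can go
   before a weight vanishes. *)
have l0 : - (b + g) + b + g = 0 by ring.
have lnz : [|| - (b + g) != 0, b != 0 | g != 0] by case: bg0 => ->; rewrite /= ?orbT.
have lP1 : 0 <= - (b + g) * A.1 + b * B.1 + g * C.1 by move: dir1 => /=; nra.
have lP2 : 0 <= - (b + g) * A.2 + b * B.2 + g * C.2 by move: dir2 => /=; nra.
have [[l_neg lj lk]|[[l_neg lj lk]|[l_neg lj lk]]] := ratio_test3 wa0 wb0 wc0 l0 lnz.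
- exact/Or31/(ratio_step l_neg l0 wa0 lj lk lP1 lP2).
- apply/Or32/(dominated_on_edge_le (ratio_step (Pi := B) l_neg _ wb0 lj lk _ _));
    rewrite /=; lra.
- apply/Or33/(dominated_on_edge_le (ratio_step (Pi := C) l_neg _ wc0 lj lk _ _));
    rewrite /=; lra.
Qed.

Lemma expected_dominated_on_edge n (p : 'I_n.+1 -> R) (a : 'I_n.+1 -> R * R) :
  (forall j, 0 <= p j) ->
  exists u v, dominated_on_edge (\sum_j p j) (expected p a) (a u) (a v).
Proof.
elim: n p a => [|n IH] p a p0.
  exists ord0, ord0, (p ord0), 0.
  by rewrite /expected !big_ord1 /=; split; rewrite ?lexx //; lra.
pose w := widen_ord (leqnSn n.+1).
have [u [v [al [be [al0 be0 Sab le1 le2]]]]] :=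
  IH (p \o w) (a \o w) (fun i => p0 (w i)).
rewrite /expected /= in le1 le2.
have [dom|dom|dom] :=
  dominated_on_edge3 (a (w u)) (a (w v)) (a ord_max) al0 be0 (p0 ord_max);
  [exists (w v), ord_max | exists (w u), ord_max | exists (w u), (w v)];
  apply: (dominated_on_edge_le dom); rewrite /expected /= !(big_ord_recr n.+1) /=; lra.
Qed.

Lemma distr_dominated_on_edge n (p : 'I_n -> R) (a : 'I_n -> R * R) :
  is_distr p -> exists u v, dominated_on_edge 1 (expected p a) (a u) (a v).
Proof.
case: n p a => [|n] p a [p0 p1].
  by move: p1; rewrite big_ord0 => /eqP; rewrite eq_sym oner_eq0.
by rewrite -p1; exact: expected_dominated_on_edge.
Qed.
End EdgeDomination.

Section UniformRounding.
Variable R : realFieldType.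

Lemma nat_bracket (k : nat) (x : R) : 0 <= x <= k%:R ->
  exists2 m : nat, (m <= k)%N & m%:R <= x <= m%:R + 1.
Proof.
elim: k => [|k IH] /andP[x0 xk]; first by exists 0%N => //; apply/andP; lra.
have [xk'|xk'] := lerP x k%:R.
  by have [m mk mx] := IH (introT andP (conj x0 xk')); exists m => //; exact: leqW.
by exists k => //; rewrite -natr1 in xk; apply/andP; lra.
Qed.

Lemma kmultiset_of n k (g : 'I_n -> nat) : (\sum_j g j)%N = k ->
  exists c : kmultiset n k, forall j, val c j = g j :> nat.
Proof.
move=> gk.
have g_lt j : (g j < k.+1)%N by rewrite ltnS -gk (bigD1 j) //= leq_addr.
have c_sum : (\sum_j nat_of_ord ([ffun j => Ordinal (g_lt j)] j) == k)%N.
  by apply/eqP; rewrite -[X in _ = X]gk; apply: eq_bigr => j _; rewrite ffunE.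
by exists (exist _ [ffun j => Ordinal (g_lt j)] c_sum) => j; rewrite /= ffunE.
Qed.

Lemma rounding_error (k m : nat) (t zu zv : R) : (0 < k)%N -> (m <= k)%N ->
  m%:R <= t * k%:R <= m%:R + 1 -> 0 <= zu <= 1 -> 0 <= zv <= 1 ->
  t * zu + (1 - t) * zv - k%:R^-1 <=
    m%:R / k%:R * zu + (k - m)%:R / k%:R * zv.
Proof.
move=> k0 mk /andP[mt tm] /andP[zu0 zu1] /andP[zv0 zv1].
have kR0 : 0 < k%:R :> R by rewrite ltr0n.
rewrite natrB // [(_ - _) / _]mulrBl divff ?gt_eqF //.
set mu := m%:R / k%:R.
have mu_t : mu <= t by rewrite /mu ler_pdivrMr.
have t_mu : t <= mu + k%:R^-1.
  by rewrite -[k%:R^-1]mul1r -mulrDl ler_pdivlMr.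
have : (t - mu) * (zu - zv) <= k%:R^-1 by nra.
lra.
Qed.

Lemma kuniform_near_edge n k (a : 'I_n -> R * R) (u v : 'I_n) (y : R * R) :
  (0 < k)%N -> collection a -> dominated_on_edge 1 y (a u) (a v) ->
  exists c : kmultiset n k,
    y.1 - k%:R^-1 <= (expected (kuniform R c) a).1 /\
    y.2 - k%:R^-1 <= (expected (kuniform R c) a).2.
Proof.
move=> k0 col [t [t' [t0 t'0 tt' le1 le2]]].
have [m mk mt] : exists2 m, (m <= k)%N & m%:R <= t * k%:R <= m%:R + 1.
  by apply: nat_bracket; rewrite mulr_ge0 ?ler0n ?ler_piMl ?ler0n //; lra.
pose g j := ((if j == u then m else 0) + (if j == v then k - m else 0))%N.
have [c cE] : exists c : kmultiset n k, forall j, val c j = g j :> nat.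
  by apply: kmultiset_of; rewrite big_split /= -!big_mkcond !big_pred1_eq subnKC.
have expE (z : R * R -> R) : \sum_j kuniform R c j * z (a j) =
    m%:R / k%:R * z (a u) + (k - m)%:R / k%:R * z (a v).
  rewrite (eq_bigr (fun j => (if j == u then m%:R / k%:R * z (a j) else 0) +
                             (if j == v then (k - m)%:R / k%:R * z (a j) else 0))).
    by rewrite big_split /= -!big_mkcond !big_pred1_eq.
  move=> j _; rewrite /kuniform cE /g natrD !mulrDl.
  by case: (j == u); case: (j == v); rewrite ?mul0r ?add0r ?addr0.
exists c; rewrite /expected /= !expE.
have [[u10 u20] [v10 v20]] := (col u, col v).
have := rounding_error k0 mk mt u10 v10.
have := rounding_error k0 mk mt u20 v20.
have t'E : t' = 1 - t by lra.
by rewrite t'E in le1 le2; split; lra.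
Qed.
End UniformRounding.

Section UniformMechanism.
Variable R : realFieldType.

Lemma kuniform_distr n k (c : kmultiset n k) : (0 < k)%N -> is_distr (kuniform R c).
Proof.
move=> k0; split=> [j|]; first by rewrite /kuniform divr_ge0 ?ler0n.
by rewrite /kuniform -mulr_suml -natr_sum (eqP (valP c)) divff // pnatr_eq0 -lt0n.
Qed.

Lemma expected_collection n (p : 'I_n -> R) (a : 'I_n -> R * R) :
  is_distr p -> collection a ->
  (0 <= (expected p a).1 <= 1) /\ (0 <= (expected p a).2 <= 1).
Proof.
move=> [p0 p1] col.
have unit_mean (z : R * R -> R) : (forall j, 0 <= z (a j) <= 1) ->
    0 <= \sum_j p j * z (a j) <= 1.
  move=> z01; rewrite sumr_ge0 /= => [|j _]; last by rewrite mulr_ge0 // (andP (z01 j)).1.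
  rewrite -p1 ler_sum // => j _.
  by rewrite ler_piMr // (andP (z01 j)).2.
by split; apply: unit_mean => j; case: (col j).
Qed.

Lemma payoff_mech_k (M : mechanism R) k (e : forall n, 'I_(kUN_size n k) -> kmultiset n k)
    n (a : 'I_n -> R * R) (s1 : Sig1 (mech_k M e) n) (s2 : Sig2 (mech_k M e) n) :
  payoff a s1 s2 = @payoff R M _ (kUN (e n) a) s1 s2.
Proof.
rewrite /payoff /expected /kUN /=; congr pair;
  under eq_bigr do rewrite mulr_suml;
  rewrite exchange_big; apply: eq_bigr => i _; rewrite /expected /= mulr_sumr;
  by apply: eq_bigr => j _; rewrite mulrA.
Qed.

Lemma NEO_mech_k (M : mechanism R) k (e : forall n, 'I_(kUN_size n k) -> kmultiset n k)
    n (a : 'I_n -> R * R) x :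
  NEO (mech_k M e) a x -> NEO M (kUN (e n) a) x.
Proof.
move=> [s1 [s2 [[NE1 NE2] ->]]]; exists s1, s2; rewrite payoff_mech_k.
by split => //; split=> s; rewrite -!payoff_mech_k; [exact: NE1 | exact: NE2].
Qed.
End UniformMechanism.

Theorem proposition4 (R : realFieldType) (M : mechanism R) (delta : R) (k : nat)
  (e : forall n, 'I_(kUN_size n k) -> kmultiset n k) :
  valid_mechanism M ->
  pareto_efficient_all_equilibria delta M ->
  (0 < k)%N ->
  (forall n, bijective (e n)) ->
  close_frontier_all_equilibria (delta + k%:R^-1) (mech_k M e).
Proof.
move=> _ M_eff k0 e_bij n a col x /NEO_mech_k NEx [y [[p [p_distr ->]] [lt1 lt2]]].
have colC : collection (kUN (e n) a).
  by move=> i; apply: expected_collection col; exact: kuniform_distr.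
apply: (M_eff _ _ colC _ NEx).
have [u [v dom]] := distr_dominated_on_edge a p_distr.
have [c [c1 c2]] := kuniform_near_edge k0 col dom.
have [e_inv _ eK] := e_bij n.
by exists (e_inv c); rewrite /kUN eK; lra.
Qed.
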